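(* For $n\ge 1$, the number of shallow $231$-avoiding involutions in $S_n$ equals $2^{n-1}$ (in fact every $231$-avoiding involution is shallow).
   Context: For $\pi\in S_n$: $D(\pi)=\sum_{i}|\pi_i-i|$, $I(\pi)$ is the number of inversions, $T(\pi)=n-\mathrm{cyc}(\pi)$ with $\mathrm{cyc}$ the number of cycles in the disjoint cycle decomposition; $\pi$ is shallow if $I(\pi)+T(\pi)=D(\pi)$. A permutation avoids a pattern $\sigma$ if it has no subsequence order-isomorphic to $\sigma$. An involution is a permutation with $\pi=\pi^{-1}$. *)

(* Permutations of {1..n} are modelled as 'S_n = {perm 'I_n}
   (values shifted to {0..n-1}; all statistics below are shift-invariant). *)
From mathcomp Require Import all_boot all_fingroup.
Set Implicit Arguments. Unset Strict Implicit. Unset Printing Implicit Defensive.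

Definition Dstat n (p : 'S_n) : nat :=
  \sum_(i < n) ((p i - i) + (i - p i))%N.

Definition Istat n (p : 'S_n) : nat :=
  #|[set ij : 'I_n * 'I_n | (ij.1 < ij.2) && (p ij.2 < p ij.1)]|.

Definition cyc n (p : 'S_n) : nat := #|porbits p|.

Definition Tstat n (p : 'S_n) : nat := (n - cyc p)%N.

Definition shallow n (p : 'S_n) : bool := (Istat p + Tstat p == Dstat p)%N.

(* A pattern is given as a sequence of distinct naturals (0-based one-line
   notation, e.g. 231 is [:: 1; 2; 0]).  p contains the pattern s if there is
   a subsequence p(f 0), ..., p(f (k-1)) with f strictly increasing, which is
   order-isomorphic to s. *)
Definition contains n (p : 'S_n) (s : seq nat) : bool :=
  [exists f : {ffun 'I_(size s) -> 'I_n},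
     [forall a : 'I_(size s), forall b : 'I_(size s),
        ((a < b) ==> (f a < f b)) &&
        ((p (f a) < p (f b)) == (nth 0 s a < nth 0 s b))]].

Definition avoids n (p : 'S_n) (s : seq nat) : bool := ~~ contains p s.

Definition pat231 : seq nat := [:: 1; 2; 0].

Definition involution n (p : 'S_n) : bool := (p^-1)%g == p.

(* A permutation [p] reverses intervals when it maps the interval between
   each [i] and [p i] onto itself in decreasing order; these are the direct
   sums of decreasing blocks.  For such [p] the inversions are the pairs
   (i, j) with j in (i, p i] or i in (p j, j), so that
   I(p) = sum_(p i > i) (p i - i) + sum_(p i < i) (i - p i - 1), while [p] is
   an involution whose 2-cycles are counted by #{i | p i < i} = T(p); the
   two add up to D(p).
   A 231-avoiding involution reverses intervals: it is decreasing on each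
   [i, p i], as an ascent j < k there yields 231 at (j, k, p i), and a
   decreasing map of [i, p i] taking the endpoint values p i and i must be
   j |-> i + p i - j.  Conversely interval-reversing permutations avoid 231,
   and each is determined by its set of cuts (the c < n - 1 with
   p c <= c < p (c + 1)), any set of cuts occurring: there are 2^(n-1). *)

From mathcomp Require Import all_boot all_fingroup zify.
Set Implicit Arguments. Unset Strict Implicit. Unset Printing Implicit Defensive.

Lemma card_set_sum (T : finType) (P : pred T) :
  #|[set x : T | P x]| = \sum_(x : T) P x.
Proof. by rewrite -sum1dep_card big_mkcond; apply: eq_bigr => x _; case: (P x). Qed.

Lemma sum_ord_interval n lo hi :
  \sum_(j < n) (lo <= j < hi) = minn n hi - lo.
Proof.
elim: n => [|n IHn]; first by rewrite big_ord0; lia.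
by rewrite big_ord_recr /= IHn; case: (leqP lo n); case: (ltnP n hi) => /=; lia.
Qed.

Lemma involutionP n (p : 'S_n) : reflect (forall i, p (p i) = i) (involution p).
Proof.
apply: (iffP eqP) => [pV i|pp]; first by rewrite -{1}pV permK.
by apply/permP => i; rewrite -{1}(pp i) permK.
Qed.

Lemma decreasing_gap (f : nat -> nat) a b :
    (forall j k, a <= j -> j < k -> k <= b -> f k < f j) ->
  forall j k, a <= j -> j <= k -> k <= b -> f k + (k - j) <= f j.
Proof.
move=> f_decr j k aj jk kb; rewrite -(subnKC jk) in kb *; rewrite addKn.
elim: (k - j) kb => [|d IHd] kb; first by rewrite !addn0.
by have := f_decr (j + d) (j + d).+1; rewrite -addnS; lia.
Qed.

(* [p] on [nat], extended by the identity, so that it can be evaluated at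
   [c.+1] for [c : 'I_n.-1]. *)
Definition natfun n (p : 'S_n) (i : nat) : nat :=
  if insub i is Some x then val (p x) else i.

Lemma natfunE n (p : 'S_n) (x : 'I_n) : natfun p x = p x.
Proof. by rewrite /natfun valK. Qed.

Lemma natfun_ord n (p : 'S_n) x (xn : x < n) : natfun p x = p (Ordinal xn).
Proof. exact: natfunE (Ordinal xn). Qed.

Lemma natfun_lt n (p : 'S_n) i : i < n -> natfun p i < n.
Proof. by move=> i_lt; rewrite (natfun_ord p i_lt). Qed.

Section Involution.
Variables (n : nat) (p : 'S_n).
Hypothesis pK : forall i, p (p i) = i.

Lemma porbit_involution i : porbit p i = [set i; p i].
Proof.
have expgp k x : (p ^+ k)%g x = if odd k then p x else x.
  elim: k => [|k IHk] in x *; first by rewrite expg0 perm1.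
  by rewrite expgSr permM IHk /=; case: (odd k) => /=; rewrite ?pK.
apply/setP => y; rewrite !inE; apply/porbitP/idP => [[k ->]|/orP[] /eqP ->].
- by rewrite expgp; case: (odd k); rewrite eqxx ?orbT.
- by exists 0; rewrite expg0 perm1.
- by exists 1; rewrite expg1.
Qed.

(* Every cycle is {i, p i}; its least element is the unique one with i <= p i. *)
Lemma cyc_involution : cyc p = #|[set i : 'I_n | i <= p i]|.
Proof.
rewrite /cyc /porbits.
have -> : porbit p @: 'I_n = porbit p @: [set i : 'I_n | i <= p i].
  apply/setP => O; apply/imsetP/imsetP => [[i _ ->]|[i _ ->]]; last by exists i.
  case: (leqP i (p i)) => [le_i|lt_i]; first by exists i; rewrite ?inE.
  by exists (p i); rewrite ?inE ?pK ?(ltnW lt_i) // !porbit_involution pK setUC.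
rewrite card_in_imset // => i j; rewrite !inE => le_i le_j eq_ij.
have : i \in porbit p j by rewrite -eq_ij porbit_involution !inE eqxx.
rewrite porbit_involution !inE => /orP[/eqP //|/eqP ij].
by apply/val_inj/eqP; move: le_i le_j; rewrite ij pK eqn_leq => -> ->.
Qed.

Lemma Tstat_involution : Tstat p = \sum_(i < n) (p i < i).
Proof.
rewrite /Tstat cyc_involution card_set_sum.
have split_n : \sum_(i < n) (i <= p i) + \sum_(i < n) (p i < i) = n.
  by rewrite -big_split -[RHS]card_ord -sum1_card; apply: eq_bigr => i _; case: leqP.
by rewrite -{1}split_n addKn.
Qed.

End Involution.

Definition reverses_intervals n (p : 'S_n) : Prop :=
  forall i j : 'I_n, i <= j <= p i \/ p i <= j <= i -> p j + j = i + p i.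

Section ReversesIntervals.
Variables (n : nat) (p : 'S_n).
Hypothesis prev : reverses_intervals p.

Lemma reverses_intervals_involutive i : p (p i) = i.
Proof.
have : i <= p i <= p i \/ p i <= p i <= i.
  by rewrite !leqnn andbT; apply/orP; exact: leq_total.
by move/prev/addIn/ord_inj.
Qed.

Lemma inversion_reverses_intervals (i j : 'I_n) :
  ((i < j) && (p j < p i) : nat) = (i < j <= p i) + (p j < i < j).
Proof.
have Rij := @prev i j; have Rji := @prev j i; have Rjpi := @prev j (p i).
rewrite reverses_intervals_involutive in Rjpi.
case: (ltnP i j); case: (ltnP (p j) (p i)) => /=;
  by case: (leqP j (p i)); case: (ltnP (p j) i) => /=; lia.
Qed.

Lemma Istat_reverses_intervals :
  Istat p = \sum_(i < n) (p i - i) + \sum_(i < n) (i - (p i).+1).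
Proof.
rewrite /Istat card_set_sum.
rewrite -(pair_big xpredT xpredT (fun i j : 'I_n => (i < j) && (p j < p i) : nat)) /=.
under eq_bigr do under eq_bigr do rewrite inversion_reverses_intervals.
rewrite (eq_bigr _ (fun i _ => big_split _ _ _ _ _)) big_split /= [X in _ + X]exchange_big /=.
congr (_ + _); apply: eq_bigr => i _.
- under eq_bigr => j _ do rewrite -[j <= p i]ltnS.
  by rewrite sum_ord_interval; have := ltn_ord (p i); lia.
- by rewrite sum_ord_interval; have := ltn_ord i; lia.
Qed.

Lemma reverses_intervals_shallow : shallow p.
Proof.
rewrite /shallow Istat_reverses_intervals Tstat_involution;
  last exact: reverses_intervals_involutive.
rewrite /Dstat -!big_split /=; apply/eqP/eq_bigr => i _.
by rewrite -addnA subnS -subn_gt0; case: (i - p i) => // k; rewrite addn1.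
Qed.

End ReversesIntervals.

Lemma contains231P n (p : 'S_n) :
  reflect (exists a b c : 'I_n, [/\ a < b, b < c, p c < p a & p a < p b])
          (contains p pat231).
Proof.
apply: (iffP existsP) => [[f /forallP f231]|[a [b [c [ab bc ca ab']]]]].
  pose o k (hk : k < 3) : 'I_3 := Ordinal hk.
  have pat x y hx hy := forallP (f231 (o x hx)) (o y hy).
  move: (pat 0 1 isT isT) (pat 1 2 isT isT) (pat 2 0 isT isT).
  move=> /andP[f01 /eqP p01] /andP[f12 /eqP p12] /andP[_ /eqP p20].
  by exists (f (o 0 isT)), (f (o 1 isT)), (f (o 2 isT)); split; rewrite ?p01 ?p12 ?p20.
pose f := [ffun x : 'I_3 => nth a [:: a; b; c] x].
exists f; apply/forallP => x; apply/forallP => y; rewrite !ffunE.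
by case: x y => [[|[|[|x]]] hx] [[|[|[|y]]] hy]; rewrite //= ?ltnn; lia.
Qed.

(* If c <= p a then b lies in [a, p a], so p b < p a; otherwise p c < a and
   a, b lie in [p c, c], so again p b < p a. *)
Lemma reverses_intervals_avoids231 n (p : 'S_n) :
  reverses_intervals p -> avoids p pat231.
Proof.
move=> prev; apply/contains231P => -[a [b [c [ab bc ca ab']]]].
have := inversion_reverses_intervals prev a c.
have := @prev a b; have := @prev c a; have := @prev c b.
rewrite (ltn_trans ab bc) ca /=; case: (leqP c (p a)); case: (ltnP (p c) a) => /=; lia.
Qed.

Section Avoids231Involution.
Variables (n : nat) (p : 'S_n).
Hypotheses (p231 : avoids p pat231) (pK : forall i, p (p i) = i).

Let no231 (a b c : 'I_n) : a < b -> b < c -> p c < p a -> p a < p b -> False.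
Proof. by move=> ab bc ca ab'; apply: (negP p231); apply/contains231P; exists a, b, c. Qed.

Let nat_perm_inj (x y : 'I_n) : (p x : nat) = p y -> (x : nat) = y.
Proof. by move/ord_inj/perm_inj ->. Qed.

(* The images of the points strictly inside [i, p i] stay strictly inside:
   otherwise [i, j, p i] or [p j, i, j] would be an occurrence of 231. *)
Lemma involution_avoids231_inside (i j : 'I_n) : i < j < p i -> i < p j < p i.
Proof.
move=> /andP[ij jpi].
have := @no231 i j (p i); have := @no231 (p j) i j; rewrite !pK.
have := @nat_perm_inj j i; have := @nat_perm_inj j (p i); rewrite pK; lia.
Qed.

Lemma involution_avoids231_decreasing (i j k : 'I_n) :
  i <= j -> j < k -> k <= p i -> p k < p j.
Proof.
move=> ij jk kpi.
have pj_eq : (j : nat) = i -> (p j : nat) = p i by move/ord_inj ->.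
have pk_eq : (k : nat) = p i -> (p k : nat) = i by move/ord_inj ->; rewrite pK.
have := @involution_avoids231_inside i j; have := @no231 j k (p i).
by have := @nat_perm_inj j k; rewrite pK; lia.
Qed.

End Avoids231Involution.

Lemma avoids231_involution_reverses_intervals n (p : 'S_n) :
  avoids p pat231 -> involution p -> reverses_intervals p.
Proof.
move=> p231 /involutionP pK.
have reverse_up (i j : 'I_n) : i <= j <= p i -> p j + j = i + p i.
  move=> /andP[ij jpi].
  have p_decr x y : i <= x -> x < y -> y <= p i -> natfun p y < natfun p x.
    move=> ix xy ypi; have yn : y < n := leq_ltn_trans ypi (ltn_ord _).
    rewrite (natfun_ord p yn) (natfun_ord p (ltn_trans xy yn)).
    exact: (@involution_avoids231_decreasing _ _ p231 pK i (Ordinal _) (Ordinal yn)).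
  have := decreasing_gap p_decr (leqnn i) ij jpi.
  have := decreasing_gap p_decr ij jpi (leqnn _).
  by rewrite !natfunE pK; lia.
move=> i j [/reverse_up // | pij].
by have := reverse_up (p i) j; rewrite pK [p i + i]addnC; apply.
Qed.

Section BlockPermutation.
Variables (n : nat) (C : {set 'I_n.-1}).

(* [c \in C] cuts between positions [c] and [c.+1]; position [n.-1] ends the last block. *)
Definition is_block_end (c : nat) : bool := (n.-1 <= c) || (c \in [seq val x | x in C]).

Lemma block_end_exists i : exists c, (i <= c) && is_block_end c.
Proof. by exists (i + n.-1); rewrite leq_addr /is_block_end leq_addl. Qed.

Definition block_last i : nat := ex_minn (block_end_exists i).

Lemma block_last_ge i : i <= block_last i.
Proof. by rewrite /block_last; case: ex_minnP => c /andP[]. Qed.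

Lemma block_end_last i : is_block_end (block_last i).
Proof. by rewrite /block_last; case: ex_minnP => c /andP[]. Qed.

Lemma block_last_min i c : i <= c -> is_block_end c -> block_last i <= c.
Proof. by rewrite /block_last; case: ex_minnP => m _ m_min ic ec; apply: m_min; rewrite ic. Qed.

Lemma block_last_mono i j : i <= j -> block_last i <= block_last j.
Proof. by move=> ij; rewrite block_last_min ?block_end_last // (leq_trans ij) ?block_last_ge. Qed.

Lemma block_last_id c : is_block_end c -> block_last c = c.
Proof. by move=> ec; apply/eqP; rewrite eqn_leq block_last_min ?block_last_ge. Qed.

Definition block_first i : nat :=
  ex_minn (ex_intro (fun k => block_last k == block_last i) i (eqxx _)).

Lemma block_first_le i : block_first i <= i.
Proof. by rewrite /block_first; case: ex_minnP => k _; apply. Qed.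

Lemma block_last_first i : block_last (block_first i) = block_last i.
Proof. by rewrite /block_first; case: ex_minnP => k /eqP. Qed.

Lemma block_first_min i k : block_last k = block_last i -> block_first i <= k.
Proof. by rewrite /block_first; case: ex_minnP => m _ m_min /eqP; apply: m_min. Qed.

Lemma block_same i j : block_first i <= j <= block_last i ->
  block_last j = block_last i /\ block_first j = block_first i.
Proof.
move=> /andP[fj jl].
have lastj : block_last j = block_last i.
  apply/eqP; rewrite eqn_leq block_last_min ?block_end_last //=.
  by rewrite -block_last_first block_last_mono.
by split=> //; apply: eq_ex_minn => k; rewrite lastj.
Qed.

Lemma block_end_inside i c : block_first i <= c < block_last i -> ~~ is_block_end c.
Proof.
move=> /andP[fc cl]; apply/negP => /block_last_id ec.
have /block_same[last_c _] : block_first i <= c <= block_last i by rewrite fc ltnW.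
by rewrite -last_c ec ltnn in cl.
Qed.

Lemma block_same_next c : ~~ is_block_end c ->
  block_last c.+1 = block_last c /\ block_first c.+1 = block_first c.
Proof.
move=> nec; have cl : c < block_last c.
  by rewrite ltn_neqAle block_last_ge andbT; apply: contraNneq nec => ->; apply: block_end_last.
by apply: block_same; rewrite cl (leq_trans (block_first_le c)).
Qed.

Lemma block_last_lt i : i < n -> block_last i < n.
Proof. by move=> i_lt; have := @block_last_min i n.-1; rewrite /is_block_end leqnn; lia. Qed.

Lemma block_first_next c : is_block_end c -> block_first c.+1 = c.+1.
Proof.
move=> ec; apply/eqP; rewrite eqn_leq block_first_le ltnNge; apply/negP => fc.
have := block_last_ge c.+1; rewrite -block_last_first.
by have := block_last_min fc ec; lia.
Qed.

Lemma block_end_before_first i c : c.+1 = block_first i -> is_block_end c.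
Proof.
move=> c_first; apply/negPn/negP => /block_same_next[+ _].
by rewrite c_first block_last_first => /esym/block_first_min; lia.
Qed.

Definition block_rev i : nat := block_first i + block_last i - i.

Lemma block_rev_in i : block_first i <= block_rev i <= block_last i.
Proof. by have := block_first_le i; have := block_last_ge i; rewrite /block_rev; lia. Qed.

Lemma block_revK i : block_rev (block_rev i) = i.
Proof.
have [last_rev first_rev] := block_same (block_rev_in i).
rewrite {1}/block_rev last_rev first_rev.
by have := block_first_le i; have := block_last_ge i; rewrite /block_rev; lia.
Qed.

Lemma block_rev_lt i : i < n -> block_rev i < n.
Proof.
by move=> i_lt; have := block_rev_in i; have := block_last_lt i_lt; lia.
Qed.

Definition block_rev_ord (i : 'I_n) : 'I_n := Ordinal (block_rev_lt (ltn_ord i)).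

Lemma block_rev_ordK : involutive block_rev_ord.
Proof. by move=> i; apply: val_inj; rewrite /= block_revK. Qed.

Definition block_perm : 'S_n := perm (can_inj block_rev_ordK).

Lemma block_permE i : block_perm i = block_rev i :> nat.
Proof. by rewrite permE. Qed.

Lemma natfun_block_perm i : i < n -> natfun block_perm i = block_rev i.
Proof. by move=> i_lt; rewrite (natfun_ord _ i_lt) block_permE. Qed.

Lemma block_perm_reverses_intervals : reverses_intervals block_perm.
Proof.
move=> i j; rewrite !block_permE => j_in.
have := block_first_le i; have := block_last_ge i; have := block_rev_in i.
move=> rev_in last_ge first_le.
have [last_j first_j] : block_last j = block_last i /\ block_first j = block_first i.
  by apply: block_same; lia.
by rewrite /block_rev last_j first_j; lia.
Qed.

End BlockPermutation.

Definition cuts n (p : 'S_n) : {set 'I_n.-1} :=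
  [set c : 'I_n.-1 | natfun p c <= c < natfun p c.+1].

Lemma is_block_end_ord n (C : {set 'I_n.-1}) (c : 'I_n.-1) :
  is_block_end C c = (c \in C).
Proof. by rewrite /is_block_end leqNgt ltn_ord (mem_map val_inj) mem_enum. Qed.

Lemma is_block_end_cuts n (p : 'S_n) c : c.+1 < n ->
  is_block_end (cuts p) c = (natfun p c <= c < natfun p c.+1).
Proof.
move=> c_lt; have c_lt' : c < n.-1 by lia.
by rewrite -[c]/(val (Ordinal c_lt')) is_block_end_ord inE.
Qed.

Lemma cuts_block_perm n (C : {set 'I_n.-1}) : cuts (block_perm C) = C.
Proof.
apply/setP => c; rewrite inE -is_block_end_ord.
have c_lt : c.+1 < n by have := ltn_ord c; lia.
rewrite !natfun_block_perm ?(ltnW c_lt) // /block_rev.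
have := block_first_le C c; have := block_last_ge C c.+1.
case: (boolP (is_block_end C c)) => [ec | /block_same_next[-> ->]].
- by rewrite (block_last_id ec) (block_first_next ec); lia.
- by have := block_first_le C c; have := block_last_ge C c; lia.
Qed.

Section ReversesIntervalsNat.
Variables (n : nat) (p : 'S_n).
Hypothesis prev : reverses_intervals p.
Local Notation f := (natfun p).

Lemma natfun_reverses i j : i < n -> i <= j <= f i \/ f i <= j <= i -> f j + j = i + f i.
Proof.
move=> i_lt j_in; have j_lt : j < n by have := natfun_lt p i_lt; lia.
rewrite (natfun_ord p i_lt) (natfun_ord p j_lt) in j_in *.
exact: (@prev (Ordinal i_lt) (Ordinal j_lt)).
Qed.

Lemma natfun_involutive i : i < n -> f (f i) = i.
Proof. by move=> i_lt; rewrite (natfun_ord p i_lt) natfunE reverses_intervals_involutive. Qed.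

Lemma natfun_descent c : c.+1 < n -> ~~ (f c <= c < f c.+1) -> f c.+1 + 1 = f c.
Proof.
move=> c_lt; have := @natfun_reverses c c.+1 (ltnW c_lt).
have := @natfun_reverses c.+1 c c_lt; have := natfun_lt p c_lt.
by case: leqP; case: ltnP => /=; lia.
Qed.

(* The hypotheses say that [S, E] is a maximal interval without cuts. *)
Lemma natfun_cut_free S E : S <= E < n ->
    (forall c, c.+1 = S -> f c <= c < f S) -> (E.+1 < n -> f E <= E < f E.+1) ->
    (forall c, S <= c < E -> ~~ (f c <= c < f c.+1)) ->
  f S = E.
Proof.
move=> /andP[S_le_E E_lt] cutS cutE no_cut.
have S_lt : S < n by lia.
have fS_lt := natfun_lt p S_lt.
have S_fS : S <= f S.
  have [-> //|S_gt0] := posnP S.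
  by have := cutS S.-1 (prednK S_gt0); lia.
have fS_E : f S <= E.
  have [/cutE|] := ltnP E.+1 n; last by lia.
  by have := @natfun_reverses S E S_lt; have := @natfun_reverses S E.+1 S_lt; lia.
suff E_fS : E <= f S by lia.
rewrite leqNgt; apply/negP => fS_lt_E.
have /natfun_descent : ~~ (f (f S) <= f S < f (f S).+1) by apply: no_cut; lia.
rewrite natfun_involutive // => /(_ ltac:(lia)) descS.
have S_gt0 : 0 < S by lia.
have fS1 : f S.-1 = (f S).+1.
  by rewrite -(natfun_involutive (_ : (f S).+1 < n)); [congr f | ]; lia.
by have := cutS S.-1 (prednK S_gt0); rewrite fS1; lia.
Qed.

Lemma natfun_block_first o : o < n ->
  f (block_first (cuts p) o) = block_last (cuts p) o.
Proof.
move=> o_lt; have S_le := block_first_le (cuts p) o.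
have o_le := block_last_ge (cuts p) o; have E_lt := block_last_lt (cuts p) o_lt.
apply: natfun_cut_free => [|c c_S|E1_lt|c c_in].
- by rewrite (leq_trans S_le).
- by rewrite -c_S -is_block_end_cuts ?c_S ?(block_end_before_first c_S) //; lia.
- by have := block_end_last (cuts p) o; rewrite is_block_end_cuts.
- by have := block_end_inside c_in; rewrite is_block_end_cuts //; lia.
Qed.

Lemma block_perm_cuts : block_perm (cuts p) = p.
Proof.
apply/permP => o; apply: ord_inj; rewrite block_permE /block_rev -natfun_block_first //.
have S_le := block_first_le (cuts p) o; have o_le := block_last_ge (cuts p) o.
rewrite -natfun_block_first // in o_le.
by have := @natfun_reverses _ o (leq_ltn_trans S_le (ltn_ord o)); rewrite natfunE; lia.
Qed.

End ReversesIntervalsNat.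

Lemma reverses_intervalsP n (p : 'S_n) :
  reverses_intervals p <-> avoids p pat231 /\ involution p.
Proof.
split=> [prev | [p231 pI]]; last exact: avoids231_involution_reverses_intervals.
by split; [apply: reverses_intervals_avoids231 | apply/involutionP/reverses_intervals_involutive].
Qed.

Lemma reverses_intervals_block_perm n (p : 'S_n) :
  reverses_intervals p <-> p \in [set block_perm C | C : {set 'I_n.-1}].
Proof.
split=> [prev | /imsetP[C _ ->]]; last exact: block_perm_reverses_intervals.
by apply/imsetP; exists (cuts p); rewrite ?block_perm_cuts.
Qed.

Theorem theorem4p6 (n : nat) (hn : (1 <= n)%N) :
  #|[set p : 'S_n | [&& shallow p, avoids p pat231 & involution p]]| = (2 ^ n.-1)%N
  /\ (forall p : 'S_n, avoids p pat231 -> involution p -> shallow p).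
Proof.
have avoids231_involution_shallow (p : 'S_n) :
    avoids p pat231 -> involution p -> shallow p.
  by move=> p231 pI; apply/reverses_intervals_shallow/reverses_intervalsP.
split=> //.
have -> : [set p : 'S_n | [&& shallow p, avoids p pat231 & involution p]]
          = [set block_perm C | C : {set 'I_n.-1}].
  apply/setP => p; rewrite inE.
  apply/and3P/idP => [[_ p231 pI] | /reverses_intervals_block_perm/reverses_intervalsP[p231 pI]].
  - exact/reverses_intervals_block_perm/reverses_intervalsP.
  - by split; rewrite ?avoids231_involution_shallow.
rewrite card_imset; last exact: can_inj (@cuts_block_perm n).
by rewrite -cardsT -powersetT card_powerset cardsT card_ord.
Qed.
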